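(* Let $n \ge 3$ and let $x_1, \dots, x_n \in \mathbb{R}$ be pairwise distinct, and let $h(\theta) = \prod_{j=1}^n (x_j - \theta)$. Then the maximum likelihood estimate $\hat\theta \in \mathbb{H}$ of the sample $x_1,\dots,x_n$ from the Cauchy distribution is a solution in $\mathbb{H}$ of the equation $$n h(\theta) - (\theta - \overline{\theta})\, h'(\theta) = 0.$$
   Context: $\mathbb{H} = \{\theta\in\mathbb{C}:\Im\theta>0\}$ and $\overline{\theta}$ is the complex conjugate. The Cauchy distribution with parameter $\theta = \mu + i\sigma\in\mathbb{H}$ has density $f(x;\theta) = \frac{\sigma}{\pi}\frac{1}{(x-\mu)^2+\sigma^2}$; the maximum likelihood estimate is the (unique) maximizer over $\mathbb{H}$ of $\prod_{j=1}^n f(x_j;\theta)$. *)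

From HB Require Import structures.
From mathcomp Require Import all_boot all_order all_algebra.
From mathcomp Require Import reals trigo.
From mathcomp Require Import complex.
Set Implicit Arguments. Unset Strict Implicit. Unset Printing Implicit Defensive.
Import Order.TTheory GRing.Theory Num.Theory.
Local Open Scope ring_scope.

Definition cauchy_density {R : realType} (theta : R[i]) (x : R) : R :=
  complex.Im theta / pi / ((x - complex.Re theta) ^+ 2 + complex.Im theta ^+ 2).

Definition in_upper_half {R : realType} (theta : R[i]) : Prop :=
  0 < complex.Im theta.

Definition cauchy_likelihood {R : realType} (n : nat) (x : 'I_n -> R)
  (theta : R[i]) : R := \prod_(j < n) cauchy_density theta (x j).

Definition is_cauchy_mle {R : realType} (n : nat) (x : 'I_n -> R)
  (theta : R[i]) : Prop :=
  in_upper_half theta /\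
  forall theta' : R[i], in_upper_half theta' ->
    cauchy_likelihood x theta' <= cauchy_likelihood x theta.

Definition hpoly {R : realType} (n : nat) (x : 'I_n -> R) : {poly R[i]} :=
  \prod_(j < n) ((x j)%:C%C%:P - 'X).

(* At the maximiser theta = m + i s of L(z) = (Im z / pi)^n / prod_j |x_j - z|^2,
   moving theta horizontally or vertically turns L(z) <= L(theta) into the
   nonnegativity of a real polynomial vanishing at the base point, so its
   derivative vanishes there.  This yields the likelihood equations
   sum_j (x_j - m) / |x_j - theta|^2 = 0 and 2 s^2 sum_j 1 / |x_j - theta|^2 = n,
   i.e. sum_j 1 / (x_j - theta) = i n / (2 s).  As h'/h = - sum_j 1 / (x_j - theta)
   and theta - conj theta = 2 i s, this is the claimed equation. *)

From HB Require Import structures.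
From mathcomp Require Import all_boot all_order all_algebra.
From mathcomp Require Import reals trigo.
From mathcomp Require Import complex polyrcf.
From mathcomp Require Import ring lra.

Set Implicit Arguments.
Unset Strict Implicit.
Unset Printing Implicit Defensive.

Import Order.TTheory GRing.Theory Num.Theory.
Local Open Scope ring_scope.
Local Open Scope complex_scope.

Local Notation Re := complex.Re.
Local Notation Im := complex.Im.

Lemma deriv_eq0_local_min (R : rcfType) (p : {poly R}) (c d : R) : 0 < d ->
  (forall t, `|t - c| < d -> p.[c] <= p.[t]) -> p^`().[c] = 0.
Proof.
move=> d_gt0 p_min.
have /factor_theorem [q Dp] : root (p - p.[c]%:P) c by rewrite rootE !hornerE subrr.
have -> : p^`().[c] = q.[c].
  have := congr1 (fun f => f^`().[c]) Dp.
  by rewrite /= derivB derivC subr0 derivM derivXsubC !hornerE subrr mulr0 add0r.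
have q_sign u : `|u| < d -> 0 <= q.[c + u] * u.
  move=> ud; have := p_min (c + u); rewrite addrAC subrr add0r => /(_ ud).
  have := congr1 (horner^~ (c + u)) Dp; rewrite !hornerE addrAC subrr add0r.
  by rewrite -subr_ge0 => <-.
(* q keeps the sign of q.[c] near c, so p = p.[c] + q * ('X - c) drops below
   p.[c] on one side of c. *)
apply/eqP; apply: contraT => qc_neq0.
have [e e_gt0 q_close] : exists2 e : R, 0 < e &
    forall y, `|y - c| < e -> `|q.[y] - q.[c]| < `|q.[c]|.
  by apply: poly_cont; rewrite normr_gt0.
pose r := Num.min d e / 2.
have r_gt0 : 0 < r by rewrite divr_gt0 // lt_min d_gt0.
have r_lt u : `|u| = r -> `|u| < d /\ `|(c + u) - c| < e.
  move=> u_r; rewrite addrAC subrr add0r u_r.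
  have : r < Num.min d e by rewrite ltr_pdivrMr // ltr_pMr ?ltr1n // lt_min d_gt0.
  by rewrite lt_min => /andP[-> ->].
have [qc_lt0|qc_ge0] := ltP q.[c] 0.
  have [ud /q_close] := r_lt r (gtr0_norm r_gt0).
  rewrite (ltr0_norm qc_lt0) ltr_distl => /andP[_ qcr].
  have := q_sign r ud; rewrite pmulr_lge0 //; lra.
have [|ud /q_close] := r_lt (- r); first by rewrite normrN gtr0_norm.
rewrite [`|q.[c]|]ger0_norm // ltr_distl => /andP[qcr _].
have := q_sign (- r) ud; rewrite mulrN oppr_ge0 pmulr_lle0 //; lra.
Qed.

Lemma horner_deriv_prod (F : fieldType) (I : Type) (r : seq I)
    (P : I -> {poly F}) (c : F) :
  (forall i, (P i).[c] != 0) ->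
  (\prod_(i <- r) P i)^`().[c] =
    (\prod_(i <- r) P i).[c] * \sum_(i <- r) (P i)^`().[c] / (P i).[c].
Proof.
move=> Pc_neq0; elim: r => [|i r IHr]; first by rewrite !big_nil derivC horner0 mulr0.
rewrite !big_cons derivM hornerD !hornerM IHr; field; exact: Pc_neq0.
Qed.

Section CauchyLikelihood.

Variables (R : realType) (n : nat) (x : 'I_n -> R).

Definition dist2 (a : R) (z : R[i]) : R := (a - Re z) ^+ 2 + Im z ^+ 2.

Lemma dist2_gt0 a z : 0 < Im z -> 0 < dist2 a z.
Proof. by move=> z_gt0; rewrite ltr_wpDl ?sqr_ge0 ?exprn_gt0. Qed.

Definition cauchy_denom (z : R[i]) : R := \prod_(j < n) dist2 (x j) z.

Lemma cauchy_denom_gt0 z : 0 < Im z -> 0 < cauchy_denom z.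
Proof. by move=> z_gt0; apply: prodr_gt0 => j _; apply: dist2_gt0. Qed.

Lemma cauchy_likelihoodE z :
  cauchy_likelihood x z = (Im z / pi) ^+ n / cauchy_denom z.
Proof.
by rewrite /cauchy_likelihood /cauchy_density prodf_div prodr_const card_ord.
Qed.

Lemma mle_denom_le (theta z : R[i]) : is_cauchy_mle x theta -> 0 < Im z ->
  Im z ^+ n * cauchy_denom theta <= Im theta ^+ n * cauchy_denom z.
Proof.
case=> theta_gt0 theta_max z_gt0; have := theta_max z z_gt0.
rewrite !cauchy_likelihoodE !expr_div_n -!mulrA !(mulrCA _ (pi ^+ n)^-1).
rewrite ler_pM2l ?invr_gt0 ?exprn_gt0 ?pi_gt0 // ler_pdivrMr ?cauchy_denom_gt0 //.
by rewrite mulrAC ler_pdivlMr ?cauchy_denom_gt0.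
Qed.

Definition denom_re_slice (s : R) : {poly R} :=
  \prod_(j < n) (((x j)%:P - 'X) ^+ 2 + (s ^+ 2)%:P).

Definition denom_im_slice (m : R) : {poly R} :=
  \prod_(j < n) (((x j - m) ^+ 2)%:P + 'X ^+ 2).

Lemma horner_denom_re_slice s m : (denom_re_slice s).[m] = cauchy_denom (m +i* s).
Proof. by rewrite horner_prod; apply: eq_bigr => j _; rewrite !hornerE. Qed.

Lemma horner_denom_im_slice m s : (denom_im_slice m).[s] = cauchy_denom (m +i* s).
Proof. by rewrite horner_prod; apply: eq_bigr => j _; rewrite !hornerE. Qed.

Lemma deriv_denom_re_slice s m : 0 < s ->
  (denom_re_slice s)^`().[m] =
    cauchy_denom (m +i* s) * (- 2 * \sum_(j < n) (x j - m) / dist2 (x j) (m +i* s)).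
Proof.
move=> s_gt0; rewrite horner_deriv_prod => [|j]; last first.
  by rewrite !hornerE gt_eqF // (dist2_gt0 (x j) (z := m +i* s)).
rewrite -horner_denom_re_slice; congr (_ * _); rewrite mulr_sumr; apply: eq_bigr => j _.
rewrite derivD deriv_exp derivC !derivE !hornerE expr1; congr (_ * _) => /=; ring.
Qed.

Lemma deriv_denom_im_slice m s : 0 < s ->
  (denom_im_slice m)^`().[s] =
    cauchy_denom (m +i* s) * (2 * s * \sum_(j < n) (dist2 (x j) (m +i* s))^-1).
Proof.
move=> s_gt0; rewrite horner_deriv_prod => [|j]; last first.
  by rewrite !hornerE gt_eqF // (dist2_gt0 (x j) (z := m +i* s)).
rewrite -horner_denom_im_slice; congr (_ * _); rewrite mulr_sumr; apply: eq_bigr => j _.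
by rewrite derivD derivC derivXn !hornerE; congr (_ * _) => /=; ring.
Qed.

Lemma mle_score_re theta : is_cauchy_mle x theta ->
  \sum_(j < n) (x j - Re theta) / dist2 (x j) theta = 0.
Proof.
case: theta => m s mle; have s_gt0 : 0 < s := proj1 mle.
have slice_min t : `|t - m| < 1 ->
    (denom_re_slice s).[m] <= (denom_re_slice s).[t].
  move=> _; rewrite !horner_denom_re_slice.
  by have := mle_denom_le (z := t +i* s) mle s_gt0; rewrite ler_pM2l ?exprn_gt0.
have := deriv_eq0_local_min ltr01 slice_min.
rewrite deriv_denom_re_slice // => /eqP.
by rewrite !mulf_eq0 gt_eqF ?cauchy_denom_gt0 //= oppr_eq0 pnatr_eq0 => /eqP.
Qed.

Lemma mle_score_im theta : (0 < n)%N -> is_cauchy_mle x theta ->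
  2 * Im theta ^+ 2 * \sum_(j < n) (dist2 (x j) theta)^-1 = n%:R.
Proof.
case: theta => m s n_gt0 mle; have s_gt0 : 0 < s := proj1 mle.
set D := cauchy_denom (m +i* s).
pose Q := s ^+ n *: denom_im_slice m - D *: 'X^n.
have Q_min t : `|t - s| < s -> Q.[s] <= Q.[t].
  move=> /[!ltr_distl] /andP[t_gt0 _]; rewrite subrr in t_gt0.
  rewrite !hornerE !horner_denom_im_slice -/D [D * _]mulrC subrr subr_ge0 mulrC.
  exact: (mle_denom_le (z := m +i* t) mle t_gt0).
have := deriv_eq0_local_min s_gt0 Q_min.
rewrite derivB !derivZ derivXn !hornerE hornerMn hornerXn deriv_denom_im_slice //= -/D.
rewrite (_ : s ^+ n = s ^+ n.-1 * s); last by rewrite -exprSr prednK.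
set S := \sum_(j < n) _.
have -> : s ^+ n.-1 * s * (D * (2 * s * S)) - D * (s ^+ n.-1 *+ n) =
          D * s ^+ n.-1 * (2 * s * s * S - n%:R) by ring.
have D_neq0 : D != 0 by rewrite gt_eqF ?cauchy_denom_gt0.
move/eqP; rewrite !mulf_eq0 (negbTE D_neq0) expf_eq0 (gt_eqF s_gt0) andbF /=.
by rewrite subr_eq0 => /eqP.
Qed.

Lemma real_sub_neq0 (a : R) (z : R[i]) : 0 < Im z -> a%:C - z != 0.
Proof.
move=> z_gt0; apply: contraTneq z_gt0 => /eqP; rewrite subr_eq0 => /eqP <- /=.
by rewrite ltxx.
Qed.

Lemma invc_real_sub (a : R) (z : R[i]) :
  (a%:C - z)^-1 = ((a - Re z) / dist2 a z)%:C + 'i * (Im z / dist2 a z)%:C.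
Proof.
case: z => m s; apply/eqP; rewrite eq_complex /= /dist2 /= sub0r sqrrN.
by rewrite !(mul0r, mul1r, subr0, addr0, add0r, mulNr, opprK) !eqxx.
Qed.

Lemma horner_deriv_hpoly z : 0 < Im z ->
  (hpoly x)^`().[z] = - (hpoly x).[z] * \sum_(j < n) ((x j)%:C - z)^-1.
Proof.
move=> z_gt0; rewrite horner_deriv_prod => [|j]; last by rewrite !hornerE real_sub_neq0.
rewrite mulNr -mulrN -sumrN; congr (_ * _); apply: eq_bigr => j _.
by rewrite derivB derivC derivX !hornerE mulN1r.
Qed.

Lemma mle_sum_inv_sub theta : (0 < n)%N -> is_cauchy_mle x theta ->
  \sum_(j < n) ((x j)%:C - theta)^-1 = 'i * (n%:R / (2 * Im theta))%:C.
Proof.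
move=> n_gt0 mle; have theta_gt0 : 0 < Im theta := proj1 mle.
rewrite (eq_bigr _ (fun j _ => invc_real_sub (x j) theta)) big_split /=.
rewrite -mulr_sumr -!rmorph_sum -mulr_sumr mle_score_re // add0r.
rewrite -(mle_score_im n_gt0 mle); congr (_ * _%:C); field.
exact: lt0r_neq0.
Qed.

End CauchyLikelihood.

Theorem mainTheorem5 (R : realType) (n : nat) (x : 'I_n -> R)
  (hn : (3 <= n)%N) (hx : injective x) (theta : R[i])
  (hmle : is_cauchy_mle x theta) :
  n%:R * (hpoly x).[theta] - (theta - (theta^*)%C) * ((hpoly x)^`()).[theta] = 0.
Proof.
(* [hx] and [3 <= n] guarantee that an MLE exists; as one is given, only
   [0 < n] is needed. *)
have theta_gt0 : 0 < Im theta := proj1 hmle.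
have n_gt0 : (0 < n)%N by apply: leq_trans hn.
rewrite subcJ horner_deriv_hpoly // mle_sum_inv_sub //.
set h := (hpoly x).[theta]; set s := Im theta.
have -> : 2 * s%:C * 'i * (- h * ('i * (n%:R / (2 * s))%:C)) =
          - 'i ^+ 2 * (2 * s%:C * (n%:R / (2 * s))%:C) * h by ring.
have -> : 2 * s%:C * (n%:R / (2 * s))%:C = n%:R :> R[i].
  rewrite -!(rmorph_nat (real_complex R)) -!rmorphM /=.
  by congr _%:C; field; exact: lt0r_neq0.
by rewrite sqr_i opprK mul1r subrr.
Qed.
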